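(* Assume $E_{l,m}$ is toric, i.e. $q-p$ divides $m$. Then the morphism $\psi=\gamma\times\eta_{-p,-1}\times\eta_{q,1}:\mathcal H\to E_{l,m}\times\mathbb P^1\times\mathbb P^1$ is bijective onto its image.
   Context: Let $l=p/q \in \mathbb Q \cap (0,1]$ with $\gcd(p,q)=1$ and $m \in \mathbb N$. Let $H_{q-p}=\{X_0^{q-p}=X_1X_4-X_2X_3\} \subset \mathbb C^5$, where $\mathbb C^5=V(0)\oplus V(1)\oplus V(1)$ with coordinates $X_0,\dots,X_4$ and $SL(2)$ acts by left multiplication on the matrix $\begin{pmatrix} X_1 & X_3\\ X_2 & X_4\end{pmatrix}$. Let $G_0=\{\mathrm{diag}(t,t^{-p},t^{-p},t^q,t^q): t\in\mathbb C^*\}$ and $G_m=\{\mathrm{diag}(1,\zeta^{-1},\zeta^{-1},\zeta,\zeta): \zeta^m=1\}$. Let $E_{l,m}=H_{q-p}/\!\!/(G_0\times G_m)$. Identify $\mathrm{Irr}(G_0\times G_m)$ with $\mathbb Z\times\mathbb Z/m\mathbb Z$ and let $h(n,d)=1$ for all $(n,d)$ (the Hilbert function of the general fibers of the quotient morphism). Let $\mathcal H=\mathrm{Hilb}^{G_0\times G_m}_h(H_{q-p})$ be the invariant Hilbert scheme and $\gamma:\mathcal H\to E_{l,m}$ the Hilbert–Chow morphism. The weight space of weight $(-p,-1)$ of $\mathbb C[H_{q-p}]$ is generated over the invariants by $F_{-p,-1}=\langle X_1,X_2\rangle$, and that of weight $(q,1)$ by $F_{q,1}=\langle X_3,X_4\rangle$.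 For $[Z]\in\mathcal H$ with ideal $I_Z$, $\eta_{-p,-1}([Z])\in\mathrm{Gr}(1,F_{-p,-1}^{\vee})\cong\mathbb P^1$ is the one-dimensional quotient $F_{-p,-1}/\mathrm{Ker}$, where $\mathrm{Ker}$ is the kernel of the natural map $F_{-p,-1}\to$ (weight $(-p,-1)$ part of $\mathbb C[Z]$), i.e. the line of linear forms $s_1X_1+s_2X_2$ lying in $I_Z$; the isomorphism with $\mathbb P^1$ is $\langle t_0X_1^\vee+t_1X_2^\vee\rangle\mapsto[t_0:t_1]$. Similarly $\eta_{q,1}:\mathcal H\to\mathrm{Gr}(1,F_{q,1}^{\vee})\cong\mathbb P^1$ using $X_3,X_4$. These are $SL(2)$-equivariant. *)

From HB Require Import structures.
From mathcomp Require Import all_boot all_algebra.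
From mathcomp Require Import reals Rstruct complex.
From mathcomp Require Import mpoly.

Set Implicit Arguments.
Unset Strict Implicit.
Unset Printing Implicit Defensive.

Import GRing.Theory.
Local Open Scope ring_scope.

Notation CC := (complex Rdefinitions.R).

Notation Pol := {mpoly CC[5]}.

Definition X (k : nat) : Pol := 'X_(inord k).

Definition heq (p q : nat) : Pol := X 0 ^+ (q - p) - (X 1 * X 4 - X 2 * X 3).

(* (t, zeta) parametrises an element of G_0 x G_m. *)
Definition inG (m : nat) (t z : CC) : Prop := t != 0 /\ z ^+ m = 1.

(* The diagonal entries of diag(t, t^-p, t^-p, t^q, t^q) * diag(1, z^-1, z^-1, z, z). *)
Definition lam (p q : nat) (t z : CC) (i : 'I_5) : CC :=
  match val i with
  | 0 => t
  | 1 | 2 => (t ^+ p)^-1 * z^-1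
  | _ => t ^+ q * z
  end.

Definition act (p q : nat) (t z : CC) (f : Pol) : Pol :=
  f \mPo [tuple (lam p q t z i) *: 'X_i | i < 5].

(* The character of G_0 x G_m indexed by (n, d) in Z x Z/mZ : (t,z) |-> t^n z^d. *)
Definition chi (n d : int) (t z : CC) : CC := t ^ n * z ^ d.

Definition is_ideal (I : Pol -> Prop) : Prop :=
  [/\ I 0, (forall a b, I a -> I b -> I (a + b)) & (forall r a, I a -> I (r * a))].

Definition G_stable (p q m : nat) (I : Pol -> Prop) : Prop :=
  forall t z, inG m t z -> forall f, I f -> I (act p q t z f).

(* f + I lies in the weight-(n,d) part of C[X]/I. *)
Definition in_weight (p q m : nat) (I : Pol -> Prop) (n d : int) (f : Pol) : Prop :=
  forall t z, inG m t z -> I (act p q t z f - chi n d t z *: f).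

(* Every weight space of C[Z] = C[X]/I is one-dimensional (Hilbert function h = 1). *)
Definition hilb_one (p q m : nat) (I : Pol -> Prop) : Prop :=
  forall n d : int, exists f : Pol,
    [/\ in_weight p q m I n d f, ~ I f &
        forall g, in_weight p q m I n d g -> exists c : CC, I (g - c *: f)].

(* Closed points of the invariant Hilbert scheme Hilb^{G_0 x G_m}_h(H_{q-p}):
   G-stable ideals I of C[X] containing the equation of H_{q-p}
   (= ideals of C[H_{q-p}]) whose quotient has Hilbert function h = 1. *)
Definition HilbPt (p q m : nat) (I : Pol -> Prop) : Prop :=
  [/\ is_ideal I, I (heq p q), G_stable p q m I & hilb_one p q m I].

Definition invariant (p q m : nat) (f : Pol) : Prop :=
  forall t z, inG m t z -> act p q t z f = f.

(* Hilbert-Chow morphism: [Z] |-> the (maximal) ideal I_Z /\ C[X]^G of the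
   invariant ring, i.e. the point of the quotient E_{l,m}. *)
Definition gamma (p q m : nat) (I : Pol -> Prop) : Pol -> Prop :=
  fun f => invariant p q m f /\ I f.

(* eta_{-p,-1}: the kernel line {s1 X1 + s2 X2 in I_Z} of F_{-p,-1} -> C[Z]
   (this kernel determines the quotient F_{-p,-1}/Ker in Gr(1, F^vee) = P^1). *)
Definition eta_m (I : Pol -> Prop) : CC * CC -> Prop :=
  fun s => I (s.1 *: X 1 + s.2 *: X 2).

Definition eta_q (I : Pol -> Prop) : CC * CC -> Prop :=
  fun s => I (s.1 *: X 3 + s.2 *: X 4).

Definition psi (p q m : nat) (I : Pol -> Prop) :=
  (gamma p q m I, eta_m I, eta_q I).

From Pilot Require Import Defs.
From HB Require Import structures.
From mathcomp Require Import all_boot all_algebra cyclic separable cyclotomic.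
From mathcomp Require Import reals Rstruct complex.
From mathcomp Require Import mpoly.
From mathcomp Require Import ring zify.
From Stdlib Require Import FunctionalExtensionality PropExtensionality.

Set Implicit Arguments.
Unset Strict Implicit.
Unset Printing Implicit Defensive.

Import GRing.Theory Num.Theory.
Local Open Scope ring_scope.

(* Let k = q - p and m' = m / k.  A point I of the invariant Hilbert scheme
   contains linear forms s1 X1 + s2 X2 and s3 X3 + s4 X4 (two vectors of a
   one-dimensional weight space are dependent), the equation of H, and P - pi,
   where P = Y^(q m') Z^(p m') is an invariant monomial in the generators Y of
   C[X1, X2] / (s1 X1 + s2 X2) and Z of C[X3, X4] / (s3 X3 + s4 X4).  All four
   are read off from psi(I).  Modulo them every polynomial is a combination of
   reduced monomials X0^a Y^B Z^C (a < k, and B < q m' or C < p m'), and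
   because k divides m distinct reduced monomials have distinct characters.
   No reduced monomial lies in I, since every weight space of C[X]/I is
   nonzero; by independence of characters a combination of them lies in I
   only if it is zero.  So I is the ideal generated by the four elements,
   which only depends on psi(I). *)

(* [C_prim_root_exists] only covers [algC]. *)
Lemma prim_root_exists (C : numClosedFieldType) n :
  (0 < n)%N -> exists z : C, n.-primitive_root z.
Proof.
move=> n_gt0; have [rs Drs] := closed_field_poly_normal ('X^n - 1 : {poly C}).
rewrite lead_coefXnsubC // scale1r in Drs.
have unity_rs : all n.-unity_root rs.
  by apply/allP => z; rewrite -root_prod_XsubC -Drs.
have uniq_rs : uniq rs.
  by rewrite -separable_prod_XsubC -Drs separable_Xn_sub_1 // pnatr_eq0 -lt0n.
have size_rs : (n <= size rs)%N.
  by rewrite -ltnS -(size_prod_XsubC rs id) -Drs size_XnsubC.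
by have /hasP[z _ prim_z] := has_prim_root n_gt0 unity_rs uniq_rs size_rs; exists z.
Qed.

(** * Ideals and congruences *)

Section IdealTheory.
Variable L : Pol -> Prop.
Hypothesis idL : is_ideal L.

Lemma ideal0 : L 0. Proof. by case: idL. Qed.
Lemma idealD f g : L f -> L g -> L (f + g). Proof. by case: idL => _ + _; apply. Qed.
Lemma idealMl r f : L f -> L (r * f). Proof. by case: idL => _ _; apply. Qed.
Lemma idealMr r f : L f -> L (f * r). Proof. by rewrite mulrC; apply: idealMl. Qed.
Lemma idealN f : L f -> L (- f). Proof. by rewrite -mulN1r; apply: idealMl. Qed.
Lemma idealB f g : L f -> L g -> L (f - g).
Proof. by move=> Lf Lg; apply/idealD/idealN. Qed.
Lemma idealZ c f : L f -> L (c *: f). Proof. by rewrite -mul_mpolyC; apply: idealMl. Qed.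

Lemma idealZV c f : c != 0 -> L (c *: f) -> L f.
Proof. by move=> c_neq0 /(idealZ c^-1); rewrite scalerA mulVf // scale1r. Qed.

Lemma ideal_sum (T : Type) (s : seq T) (P : pred T) (F : T -> Pol) :
  (forall x, P x -> L (F x)) -> L (\sum_(x <- s | P x) F x).
Proof. by move=> LF; elim/big_rec: _ => [|x f Px Lf]; [exact: ideal0 | apply/idealD/Lf/LF]. Qed.

Definition eqmod f g := L (f - g).

Lemma eqmod_refl f : eqmod f f. Proof. by rewrite /eqmod subrr; exact: ideal0. Qed.
Lemma eq_eqmod f g : f = g -> eqmod f g. Proof. by move->; apply: eqmod_refl. Qed.
Lemma eqmod_sym f g : eqmod f g -> eqmod g f.
Proof. by move=> Lfg; rewrite /eqmod -opprB; apply: idealN. Qed.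
Lemma eqmod_trans g f h : eqmod f g -> eqmod g h -> eqmod f h.
Proof. by move=> Lfg /(idealD Lfg); rewrite addrA subrK. Qed.
Lemma eqmodD f f' g g' : eqmod f f' -> eqmod g g' -> eqmod (f + g) (f' + g').
Proof. by move=> Lf /(idealD Lf); rewrite /eqmod opprD addrACA. Qed.
Lemma eqmodN f f' : eqmod f f' -> eqmod (- f) (- f').
Proof. by move=> Lf; rewrite /eqmod -opprD; apply: idealN. Qed.
Lemma eqmodM f f' g g' : eqmod f f' -> eqmod g g' -> eqmod (f * g) (f' * g').
Proof.
move=> /(idealMr g) Lf /(idealMl f') /(idealD Lf).
by rewrite /eqmod mulrBl mulrBr addrA subrK.
Qed.
Lemma eqmodXn f f' n : eqmod f f' -> eqmod (f ^+ n) (f' ^+ n).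
Proof.
move=> Lf; elim: n => [|n IHn]; first by rewrite !expr0; exact: eqmod_refl.
by rewrite !exprS; apply: eqmodM.
Qed.
Lemma eqmodZ c f f' : eqmod f f' -> eqmod (c *: f) (c *: f').
Proof. by rewrite /eqmod -scalerBr; apply: idealZ. Qed.
Lemma eqmod_sum (T : Type) (s : seq T) (P : pred T) (F G : T -> Pol) :
  (forall x, P x -> eqmod (F x) (G x)) ->
  eqmod (\sum_(x <- s | P x) F x) (\sum_(x <- s | P x) G x).
Proof. by move=> FG; rewrite /eqmod -sumrB; apply: ideal_sum. Qed.
Lemma eqmod_mem f g : eqmod f g -> L g -> L f.
Proof. by move=> Lfg /(idealD Lfg); rewrite subrK. Qed.

End IdealTheory.

Section Action.
Variables (p q : nat) (t z : CC).
Local Notation act := (act p q t z).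

Lemma actB f g : act (f - g) = act f - act g. Proof. exact: raddfB. Qed.
Lemma actZ c f : act (c *: f) = c *: act f. Proof. exact: linearZ. Qed.
Lemma actM f g : act (f * g) = act f * act g. Proof. exact: rmorphM. Qed.
Lemma actXn f n : act (f ^+ n) = act f ^+ n. Proof. exact: rmorphXn. Qed.
Lemma actC c : act c%:MP = c%:MP. Proof. exact: comp_mpolyC. Qed.
Lemma act_sum (T : Type) (s : seq T) (P : pred T) (F : T -> Pol) :
  act (\sum_(x <- s | P x) F x) = \sum_(x <- s | P x) act (F x).
Proof. exact: raddf_sum. Qed.

Lemma actX i : (i < 5)%N -> act (X i) = lam p q t z (inord i) *: X i.
Proof. by move=> lt_i5; rewrite /Defs.act /X comp_mpolyXU -tnth_nth tnth_mktuple. Qed.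

End Action.

Lemma inG_t_neq0 m t z : inG m t z -> t != 0. Proof. by case. Qed.

Lemma inG_z_neq0 m t z : (0 < m)%N -> inG m t z -> z != 0.
Proof.
move=> m_gt0 [_ zm]; apply: contra_eq_neq zm => ->.
by rewrite expr0n eqn0Ngt m_gt0 eq_sym oner_neq0.
Qed.

(** * Semi-invariants and independence of characters *)

Section Characters.
Variables (p q m : nat).
Local Notation act := (act p q).

Definition semi_inv (h : Pol) (c : CC -> CC -> CC) :=
  forall t z, inG m t z -> act t z h = c t z *: h.

Definition char_sep (c c' : CC -> CC -> CC) :=
  exists t z, inG m t z /\ c t z != c' t z.

Definition in_char (L : Pol -> Prop) (c : CC -> CC -> CC) (f : Pol) :=
  forall t z, inG m t z -> L (act t z f - c t z *: f).

Lemma semi_invZ a h c : semi_inv h c -> semi_inv (a *: h) c.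
Proof. by move=> hc t z Gtz; rewrite actZ hc // !scalerA mulrC. Qed.

Lemma semi_invM f g c c' : semi_inv f c -> semi_inv g c' ->
  semi_inv (f * g) (fun t z => c t z * c' t z).
Proof.
by move=> fc gc' t z Gtz; rewrite actM fc // gc' // -scalerAl -scalerAr scalerA.
Qed.

Lemma semi_invXn f c n : semi_inv f c -> semi_inv (f ^+ n) (fun t z => c t z ^+ n).
Proof. by move=> fc t z Gtz; rewrite actXn fc // exprZn. Qed.

Lemma semi_inv_sum (T : Type) (s : seq T) (P : pred T) (h : T -> Pol) c :
  (forall y, P y -> semi_inv (h y) c) -> semi_inv (\sum_(y <- s | P y) h y) c.
Proof.
move=> hc t z Gtz; rewrite act_sum scaler_sumr.
by apply: eq_bigr => y Py; apply: hc.
Qed.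

Variables (L : Pol -> Prop) (idL : is_ideal L).

Lemma in_char_semi_inv f c : semi_inv f c -> in_char L c f.
Proof. by move=> fc t z Gtz; rewrite fc // subrr; exact: ideal0. Qed.

Lemma in_char_eq c c' f : (forall t z, inG m t z -> c t z = c' t z) ->
  in_char L c f -> in_char L c' f.
Proof. by move=> cc' fc t z Gtz; rewrite -cc' //; apply: fc. Qed.

Lemma in_charB c f g : in_char L c f -> in_char L c g -> in_char L c (f - g).
Proof.
move=> fc gc t z Gtz.
suff -> : act t z (f - g) - c t z *: (f - g) =
          (act t z f - c t z *: f) - (act t z g - c t z *: g).
  by move: (idealB idL (fc t z Gtz) (gc t z Gtz)).
by rewrite actB scalerBr !opprD !opprK addrACA.
Qed.

Lemma in_charZ c a f : in_char L c f -> in_char L c (a *: f).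
Proof.
move=> fc t z Gtz; have := idealZ idL a (fc t z Gtz).
by rewrite actZ scalerBr !scalerA mulrC.
Qed.

Hypothesis stL : G_stable p q m L.

Lemma in_char_mem c f : L f -> in_char L c f.
Proof. by move=> Lf t z Gtz; move: (idealB idL (stL Gtz Lf) (idealZ idL (c t z) Lf)). Qed.

Lemma in_char_eqmod c f g : eqmod L f g -> in_char L c f -> in_char L c g.
Proof. by move=> Lfg fc; rewrite -[g](subKr f); apply/in_charB/in_char_mem. Qed.

(* Dedekind-Artin independence of characters modulo a G-stable ideal; the
   induction step kills the head term with [act t0 z0 - c x t0 z0]. *)
Lemma semi_inv_sum_mem (T : eqType) (s : seq T) (h : T -> Pol) c c0 :
  {in s, forall y, semi_inv (h y) (c y)} -> {in s, forall y, char_sep (c y) c0} ->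
  in_char L c0 (\sum_(y <- s) h y) -> L (\sum_(y <- s) h y).
Proof.
elim: s h => [|x s IHs] h hc sep_c Fc0; first by rewrite big_nil; exact: ideal0.
have [t0 [z0 [Gtz0 cx_neq]]] := sep_c x (mem_head x s).
set a := c x t0 z0; set F := \sum_(y <- x :: s) h y.
have eqF : act t0 z0 F - a *: F = \sum_(y <- s) (c y t0 z0 - a) *: h y.
  rewrite act_sum scaler_sumr -sumrB big_cons (hc x (mem_head x s) t0 z0 Gtz0).
  rewrite subrr add0r !big_seq; apply: eq_bigr => y sy.
  by rewrite (hc y _ t0 z0 Gtz0) ?scalerBl // in_cons sy orbT.
have Fa : eqmod L (act t0 z0 F - a *: F) ((c0 t0 z0 - a) *: F).
  by rewrite /eqmod scalerBl opprB subrKA; apply: Fc0.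
apply: (idealZV idL (c := c0 t0 z0 - a)); first by rewrite subr_eq0 eq_sym.
apply/(eqmod_mem idL (eqmod_sym idL Fa)); rewrite eqF.
apply: IHs => [y sy | y sy | ].
- by apply/semi_invZ/hc; rewrite in_cons sy orbT.
- by apply: sep_c; rewrite in_cons sy orbT.
by rewrite -eqF; apply: in_char_eqmod (eqmod_sym idL Fa) (in_charZ _ Fc0).
Qed.

Lemma semi_inv_sum_sep (T : eqType) (s : seq T) (P : pred T) (h : T -> Pol) c c0 :
  {in s, forall y, semi_inv (h y) (c y)} -> (forall y, P y -> char_sep (c y) c0) ->
  in_char L c0 (\sum_(y <- s) h y) -> in_char L c0 (\sum_(y <- s | ~~ P y) h y) ->
  L (\sum_(y <- s | P y) h y).
Proof.
move=> hc sep_c Fc0 Gc0; rewrite -big_filter.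
apply: (semi_inv_sum_mem (c := c)) => [y | y | ].
- by rewrite mem_filter => /andP[_ sy]; apply: hc.
- by rewrite mem_filter => /andP[Py _]; apply: sep_c.
rewrite big_filter; have := in_charB Fc0 Gc0.
by rewrite (bigID P) /= addrK.
Qed.

End Characters.

Lemma coprime_mul_eq p q D E : (0 < p)%N -> coprime p q -> (q * D = p * E)%N ->
  exists s, D = (p * s)%N /\ E = (q * s)%N.
Proof.
move=> p_gt0 co_pq eqDE.
have /dvdnP[s eD] : (p %| D)%N by rewrite -(Gauss_dvdr _ co_pq) eqDE dvdn_mulr.
exists s; split; first by rewrite mulnC.
by apply/eqP; rewrite -(eqn_pmul2l p_gt0) -eqDE eD mulnA mulnC.
Qed.

(** * Reduced exponents *)

Section Reduced.
Variables (p k m : nat).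
Hypotheses (p_gt0 : (0 < p)%N) (k_gt0 : (0 < k)%N) (m_gt0 : (0 < m)%N).
Hypotheses (co_pq : coprime p (p + k)) (k_dvd_m : (k %| m)%N).
Local Notation q := (p + k)%N.
Local Notation m' := (m %/ k)%N.

(* A triple (a, B, C) stands for the monomial X0^a Y^B Z^C of the normal form
   below; it is reduced when it is divisible neither by X0^k nor by
   Y^(q m') Z^(p m'). *)
Definition reduced (r : nat * nat * nat) :=
  (r.1.1 < k)%N && ((r.1.2 < q * m')%N || (r.2 < p * m')%N).

Let m'_gt0 : (0 < m')%N. Proof. by rewrite divn_gt0 // dvdn_leq. Qed.

(* The hypotheses say that X0^a Y^B Z^C and X0^a' Y^B' Z^C' have the same
   character. *)
Lemma reduced_inj a B C a' B' C' :
  reduced (a, B, C) -> reduced (a', B', C') ->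
  (a + q * C + p * B' = a' + q * C' + p * B)%N ->
  (C + B' = C' + B %[mod m])%N -> (a, B, C) = (a', B', C').
Proof.
wlog le_C : a B C a' B' C' / (C' <= C)%N.
  move=> wlog_le red_r red_r' eq_deg eq_mod.
  have [le_C | /ltnW le_C] := leqP C' C; first exact: wlog_le.
  by apply/esym/wlog_le.
move=> /andP[/= a_lt red_BC] /andP[/= a'_lt _] eq_deg eq_mod.
have eq_k : (C + B' = C' + B %[mod k])%N.
  by rewrite -[LHS](modn_dvdm _ k_dvd_m) eq_mod modn_dvdm.
have ea : a = a'.
  suff : (a = a' %[mod k])%N by rewrite !modn_small.
  have e : (C * k + (a + p * (C + B')) = C' * k + (a' + p * (C' + B)))%N.
    by move: eq_deg; rewrite !mulnDl !mulnDr; lia.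
  move/(congr1 (modn^~ k)): e; rewrite !modnMDl -modnDmr -modnMmr eq_k modnMmr modnDmr.
  by move/eqP; rewrite eqn_modDr => /eqP.
subst a'; move/eqP: eq_deg; rewrite -!addnA eqn_add2l => /eqP eq_deg.
have [D eC] : exists D, C = (C' + D)%N by exists (C - C')%N; rewrite subnKC.
have le_B : (B' <= B)%N.
  rewrite -(leq_pmul2l p_gt0) -(leq_add2l (q * C')) -eq_deg eC mulnDr -addnA.
  by rewrite leq_add2l leq_addl.
have [E eB] : exists E, B = (B' + E)%N by exists (B - B')%N; rewrite subnKC.
have [s [eD eE]] : exists s, D = (p * s)%N /\ E = (q * s)%N.
  apply: coprime_mul_eq => //; apply/eqP.
  by rewrite -(eqn_add2l (q * C' + p * B')) addnAC -mulnDr -eC eq_deg eB mulnDr addnA.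
have m_dvd : (m %| k * s)%N.
  move/eqP: eq_mod; rewrite eC eB eD eE mulnDl addnAC !addnA.
  by rewrite -[X in (X %% m == _)%N]addn0 eqn_modDl mod0n eq_sym.
have [s0 | s_gt0] := posnP s; first by rewrite eC eB eD eE s0 !muln0 !addn0.
have le_s : (m' <= s)%N by rewrite dvdn_leq // -(dvdn_pmul2l k_gt0) mulnC divnK.
move: red_BC; rewrite eB eC eD eE !ltnNge.
by rewrite !(leq_trans (leq_mul (leqnn _) le_s)) ?leq_addl.
Qed.

(* [red] replaces X0^k by YZ as often as possible ([red_j] times), then
   removes [red_u] factors Y^(q m') Z^(p m'). *)
Definition red_j (r : nat * nat * nat) := (r.1.1 %/ k)%N.
Definition red_u (r : nat * nat * nat) :=
  minn ((r.1.2 + red_j r) %/ (q * m')) ((r.2 + red_j r) %/ (p * m')).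
Definition red (r : nat * nat * nat) : nat * nat * nat :=
  (r.1.1 %% k, r.1.2 + red_j r - red_u r * (q * m'), r.2 + red_j r - red_u r * (p * m'))%N.

Lemma reduced_red r : reduced (red r).
Proof.
rewrite /reduced /red /= ltn_pmod //=.
have sub_mod n d : (n - n %/ d * d = n %% d)%N by rewrite {1}(divn_eq n d) addKn.
have qm_gt0 : (0 < q * m')%N by rewrite muln_gt0 addn_gt0 p_gt0 m'_gt0.
have pm_gt0 : (0 < p * m')%N by rewrite muln_gt0 p_gt0 m'_gt0.
rewrite /red_u.
case: (leqP ((r.1.2 + red_j r) %/ (q * m')) ((r.2 + red_j r) %/ (p * m'))).
  by rewrite sub_mod ltn_pmod.
by rewrite sub_mod ltn_pmod ?orbT.
Qed.

End Reduced.

(** * Characters of the torus *)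

Section TorusCharacters.
Variables (p q m : nat).

Definition mu (t z : CC) : CC := (t ^+ p)^-1 * z^-1.
Definition nu (t z : CC) : CC := t ^+ q * z.

(* The character of X0^a Y^B Z^C, for r = (a, B, C). *)
Definition tchar (r : nat * nat * nat) (t z : CC) : CC :=
  t ^+ r.1.1 * mu t z ^+ r.1.2 * nu t z ^+ r.2.

Lemma semi_inv_X0 : semi_inv p q m (X 0) (fun t _ => t).
Proof. by move=> t z _; rewrite actX // /lam /= inordK. Qed.
Lemma semi_inv_X1 : semi_inv p q m (X 1) mu.
Proof. by move=> t z _; rewrite actX // /lam /= inordK. Qed.
Lemma semi_inv_X2 : semi_inv p q m (X 2) mu.
Proof. by move=> t z _; rewrite actX // /lam /= inordK. Qed.
Lemma semi_inv_X3 : semi_inv p q m (X 3) nu.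
Proof. by move=> t z _; rewrite actX // /lam /= inordK. Qed.
Lemma semi_inv_X4 : semi_inv p q m (X 4) nu.
Proof. by move=> t z _; rewrite actX // /lam /= inordK. Qed.

Variables (t z : CC).
Hypotheses (t_neq0 : t != 0) (z_neq0 : z != 0).

Lemma tchar_mulr a B C :
  tchar (a, B, C) t z * (t ^+ p * z) ^+ B = t ^+ (a + q * C) * z ^+ C.
Proof.
have mu_t : mu t z * (t ^+ p * z) = 1 by rewrite /mu -invfM mulVf // mulf_neq0 ?expf_neq0.
rewrite /tchar /= [t ^+ a * _ * _]mulrAC -!mulrA -exprMn mu_t expr1n mulr1.
by rewrite /nu exprMn -exprM mulrA -exprD.
Qed.

Lemma tcharE a B C : tchar (a, B, C) t z = t ^+ (a + q * C) * z ^+ C / (t ^+ p * z) ^+ B.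
Proof. by rewrite -(tchar_mulr a B C) mulfK // expf_neq0 // mulf_neq0 ?expf_neq0. Qed.

Lemma expr_split n C B :
  t ^+ (n + p * B) * z ^+ (C + B) = t ^+ n * z ^+ C * (t ^+ p * z) ^+ B.
Proof. by rewrite !exprD exprM exprMn mulrACA. Qed.

Lemma tchar_cross a B C a' B' C' : tchar (a, B, C) t z = tchar (a', B', C') t z ->
  t ^+ (a + q * C + p * B') * z ^+ (C + B') = t ^+ (a' + q * C' + p * B) * z ^+ (C' + B).
Proof.
move=> e; rewrite !expr_split -(tchar_mulr a B C) -(tchar_mulr a' B' C') e.
by rewrite -!mulrA -!exprD addnC.
Qed.

Lemma tchar_chi a B C :
  chi ((a + q * C)%:Z - (p * B)%:Z) (C%:Z - B%:Z) t z = tchar (a, B, C) t z.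
Proof.
by rewrite tcharE /chi !expfzDr // -!exprnN exprMn invfM exprM mulrACA.
Qed.

End TorusCharacters.

Lemma inG_2_1 m : inG m 2 1.
Proof. by split; [rewrite pnatr_eq0 | rewrite expr1n]. Qed.

Lemma inG_1_prim m zeta : m.-primitive_root zeta -> inG m 1 zeta.
Proof. by move=> prim_zeta; split; [rewrite oner_neq0 | rewrite prim_expr_order]. Qed.

Section Separation.
Variables (p k m : nat).
Hypotheses (p_gt0 : (0 < p)%N) (k_gt0 : (0 < k)%N) (m_gt0 : (0 < m)%N).
Hypotheses (co_pq : coprime p (p + k)) (k_dvd_m : (k %| m)%N).
Local Notation q := (p + k)%N.

(* The character is tested on (2, 1), which detects the t-degree, and on
   (1, zeta) for a primitive m-th root zeta, which detects the degree in z mod m. *)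
Lemma tchar_sep r r' : reduced p k m r -> reduced p k m r' -> r != r' ->
  char_sep m (tchar p q r) (tchar p q r').
Proof.
case: r r' => [[a B] C] [[a' B'] C'] red_r red_r' neq_r.
have two_neq0 : (2 : CC) != 0 by rewrite pnatr_eq0.
have [t_sep | /negPn/eqP e2] :=
  boolP (tchar p q (a, B, C) 2 1 != tchar p q (a', B', C') 2 1).
  by exists 2, 1; split => //; apply: inG_2_1.
have [zeta prim_zeta] := prim_root_exists CC m_gt0.
have zeta_neq0 : zeta != 0 by rewrite (prim_root_eq0 prim_zeta) -lt0n.
have [z_sep | /negPn/eqP ez] :=
  boolP (tchar p q (a, B, C) 1 zeta != tchar p q (a', B', C') 1 zeta).
  by exists 1, zeta; split => //; apply: inG_1_prim.
case/negP: neq_r; apply/eqP/(reduced_inj p_gt0 k_gt0 m_gt0 co_pq k_dvd_m red_r red_r') => /=.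
  move/(tchar_cross two_neq0 (oner_neq0 CC)): e2.
  by rewrite !expr1n !mulr1; apply: ieexprIn; rewrite ?ltr0n ?pnatr_eq1.
move/(tchar_cross (oner_neq0 CC) zeta_neq0): ez.
by rewrite !expr1n !mul1r => /eqP; rewrite (eq_prim_root_expr prim_zeta) => /eqP.
Qed.

Lemma tchar_PP t z : inG m t z -> tchar p q (0, q * (m %/ k), p * (m %/ k))%N t z = 1.
Proof.
move=> Gtz; have t_neq0 := inG_t_neq0 Gtz; have z_neq0 := inG_z_neq0 m_gt0 Gtz.
rewrite tcharE // add0n exprMn -!exprM mulnCA.
have -> : z ^+ (q * (m %/ k)) = z ^+ (p * (m %/ k)).
  by rewrite mulnDl exprD (mulnC k) divnK //; case: Gtz => _ ->; rewrite mulr1.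
by rewrite divff // mulf_neq0 ?expf_neq0.
Qed.

End Separation.

(** * Normal form modulo the generators *)

Lemma sum_partition_undup (T U : eqType) (V : nmodType) (s : seq T) (key : T -> U)
    (F : T -> V) :
  \sum_(x <- s) F x = \sum_(r <- undup (map key s)) \sum_(x <- s | key x == r) F x.
Proof.
under [RHS]eq_bigr do rewrite big_mkcond.
rewrite exchange_big /= [LHS]big_seq [RHS]big_seq; apply: eq_bigr => x sx.
rewrite (bigD1_seq (key x)) ?undup_uniq ?mem_undup ?map_f //= eqxx big1 ?addr0 // => r.
by rewrite eq_sym => /negbTE ->.
Qed.

Lemma big_ord5 (R : pzSemiRingType) (F : 'I_5 -> R) :
  \prod_(i < 5) F i = F (inord 0) * F (inord 1) * F (inord 2) * F (inord 3) * F (inord 4).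
Proof.
rewrite !big_ord_recl big_ord0 mulr1 !mulrA.
by congr (F _ * F _ * F _ * F _ * F _); apply: val_inj; rewrite /= inordK.
Qed.

Lemma mpolyX5 (a : 'X_{1.. 5}) : 'X_[a] =
  X 0 ^+ a (inord 0) * X 1 ^+ a (inord 1) * X 2 ^+ a (inord 2) *
  X 3 ^+ a (inord 3) * X 4 ^+ a (inord 4).
Proof. by rewrite mpolyXE_id big_ord5. Qed.

Definition pivot (u1 u2 : CC) (V1 V2 : Pol) : Pol :=
  if u2 != 0 then u2^-1 *: V1 else (- u1^-1) *: V2.

Lemma eqmod_pivot L u1 u2 V1 V2 : is_ideal L -> (u1 != 0) || (u2 != 0) ->
  L (u1 *: V1 + u2 *: V2) ->
  eqmod L V1 (u2 *: pivot u1 u2 V1 V2) /\ eqmod L V2 ((- u1) *: pivot u1 u2 V1 V2).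
Proof.
move=> idL u_neq0 Lu; rewrite /pivot; case: ifPn => [u2_neq0 | /negPn/eqP u2_0].
  split; first by rewrite scalerA mulfV // scale1r; apply: eqmod_refl.
  rewrite /eqmod; suff -> : V2 - (- u1) *: (u2^-1 *: V1) = u2^-1 *: (u1 *: V1 + u2 *: V2).
    exact: idealZ.
  rewrite scalerA mulNr scaleNr opprK scalerDr !scalerA mulVf // scale1r.
  by rewrite addrC mulrC.
move: u_neq0 Lu; rewrite u2_0 eqxx orbF scale0r addr0 => u1_neq0 Lu.
split; first by rewrite /eqmod scale0r subr0; apply: idealZV Lu.
by rewrite /eqmod scalerA mulrN mulNr opprK mulfV // scale1r subrr; apply: ideal0.
Qed.

Section NormalForm.
Variables (p k m : nat) (s1 s2 s3 s4 pi : CC).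
Local Notation q := (p + k)%N.
Local Notation m' := (m %/ k)%N.

Definition Y := pivot s1 s2 (X 1) (X 2).
Definition Z := pivot s3 s4 (X 3) (X 4).
Definition PP := Y ^+ (q * m') * Z ^+ (p * m').

Definition contains_gens (L : Pol -> Prop) :=
  [/\ L (s1 *: X 1 + s2 *: X 2), L (s3 *: X 3 + s4 *: X 4), L (heq p q)
    & L (PP - pi%:MP)].

Definition mono3 (r : nat * nat * nat) : Pol := X 0 ^+ r.1.1 * Y ^+ r.1.2 * Z ^+ r.2.

Definition rho (a : 'X_{1.. 5}) : nat * nat * nat :=
  (a (inord 0), a (inord 1) + a (inord 2), a (inord 3) + a (inord 4))%N.

Definition subst_coef (a : 'X_{1.. 5}) : CC :=
  s2 ^+ a (inord 1) * (- s1) ^+ a (inord 2) * s4 ^+ a (inord 3) * (- s3) ^+ a (inord 4).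

Definition red_coef (r : nat * nat * nat) : CC :=
  (s1 * s4 - s2 * s3) ^+ red_j k r * pi ^+ red_u p k m r.

Definition nf_term (f : Pol) (a : 'X_{1.. 5}) : Pol :=
  (f@_a * subst_coef a * red_coef (rho a)) *: mono3 (red p k m (rho a)).

Definition nf (f : Pol) : Pol := \sum_(a <- msupp f) nf_term f a.

Hypotheses (s12_neq0 : (s1 != 0) || (s2 != 0)) (s34_neq0 : (s3 != 0) || (s4 != 0)).
Variables (L : Pol -> Prop) (idL : is_ideal L) (genL : contains_gens L).

Lemma eqmod_X1 : eqmod L (X 1) (s2 *: Y).
Proof. by case: genL => /(eqmod_pivot idL s12_neq0) []. Qed.
Lemma eqmod_X2 : eqmod L (X 2) ((- s1) *: Y).
Proof. by case: genL => /(eqmod_pivot idL s12_neq0) []. Qed.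
Lemma eqmod_X3 : eqmod L (X 3) (s4 *: Z).
Proof. by case: genL => _ /(eqmod_pivot idL s34_neq0) []. Qed.
Lemma eqmod_X4 : eqmod L (X 4) ((- s3) *: Z).
Proof. by case: genL => _ /(eqmod_pivot idL s34_neq0) []. Qed.

Lemma eqmod_X0k : eqmod L (X 0 ^+ k) ((s1 * s4 - s2 * s3) *: (Y * Z)).
Proof.
have eq_heq : eqmod L (X 0 ^+ k) (X 1 * X 4 - X 2 * X 3).
  by case: genL => _ _; rewrite /heq addKn.
apply: (eqmod_trans idL eq_heq).
suff -> : (s1 * s4 - s2 * s3) *: (Y * Z) =
          (s2 *: Y) * ((- s3) *: Z) - ((- s1) *: Y) * (s4 *: Z).
  apply: (eqmodD idL (eqmodM idL eqmod_X1 eqmod_X4)).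
  exact: (eqmodN idL (eqmodM idL eqmod_X2 eqmod_X3)).
by rewrite -!mul_mpolyC !rmorphB !rmorphM !rmorphN /=; ring.
Qed.

Lemma eqmod_monomial a : eqmod L 'X_[a] (subst_coef a *: mono3 (rho a)).
Proof.
rewrite mpolyX5.
apply: (eqmod_trans idL (eqmodM idL _ (eqmodXn idL _ eqmod_X4))).
apply: (eqmodM idL _ (eqmodXn idL _ eqmod_X3)).
apply: (eqmodM idL _ (eqmodXn idL _ eqmod_X2)).
exact: (eqmodM idL (eqmod_refl idL _) (eqmodXn idL _ eqmod_X1)).
rewrite /subst_coef /mono3 /rho /= !exprZn !exprD -!mul_mpolyC !rmorphM /=.
by rewrite ![(_ ^+ _)%:MP]rmorphXn; apply: (eq_eqmod idL); ring.
Qed.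

Lemma eqmod_mono3_red r : eqmod L (mono3 r) (red_coef r *: mono3 (red p k m r)).
Proof.
case: r => [[a B] C]; rewrite /red_coef /red /mono3 /=.
set j := red_j k _; set u := red_u p k m _; set cc := s1 * s4 - s2 * s3.
have le_B : (u * (q * m') <= B + j)%N.
  by rewrite (leq_trans _ (leq_trunc_div _ (q * m'))) // leq_mul2r geq_minl orbT.
have le_C : (u * (p * m') <= C + j)%N.
  by rewrite (leq_trans _ (leq_trunc_div _ (p * m'))) // leq_mul2r geq_minr orbT.
have eY : Y ^+ (B + j) = Y ^+ (B + j - u * (q * m')) * (Y ^+ (q * m')) ^+ u.
  by rewrite -exprM -exprD [(_ * u)%N]mulnC subnK.
have eZ : Z ^+ (C + j) = Z ^+ (C + j - u * (p * m')) * (Z ^+ (p * m')) ^+ u.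
  by rewrite -exprM -exprD [(_ * u)%N]mulnC subnK.
have -> : X 0 ^+ a * Y ^+ B * Z ^+ C =
          (X 0 ^+ k) ^+ j * (X 0 ^+ (a %% k) * Y ^+ B * Z ^+ C).
  by rewrite {1}(divn_eq a k) exprD -exprM mulnC !mulrA.
apply: (eqmod_trans idL (eqmodM idL (eqmodXn idL j eqmod_X0k) (eqmod_refl idL _))).
set M := X 0 ^+ (a %% k) * Y ^+ (B + j - u * (q * m')) * Z ^+ (C + j - u * (p * m')).
have -> : (cc *: (Y * Z)) ^+ j * (X 0 ^+ (a %% k) * Y ^+ B * Z ^+ C) =
          cc ^+ j *: (M * PP ^+ u).
  rewrite exprZn -scalerAl /M /PP exprMn; congr (_ *: _).
  move: eY eZ; rewrite !exprD exprMn.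
  move: (X 0 ^+ _) (Y ^+ B) (Y ^+ j) (Z ^+ C) (Z ^+ j) (Y ^+ (B + j - _)) (Z ^+ (C + j - _)).
  move: (Y ^+ (q * m') ^+ u) (Z ^+ (p * m') ^+ u) => yu zu x0 yB yj zC zj y0 z0 eY eZ.
  transitivity (x0 * (yB * yj) * (zC * zj)); first by ring.
  by rewrite eY eZ [RHS]mulrACA -[x0 * y0 * yu]mulrA.
rewrite -scalerA; apply: (eqmodZ idL).
rewrite -[pi ^+ u *: M]mul_mpolyC [_%:MP * M]mulrC rmorphXn.
by apply/(eqmodM idL (eqmod_refl idL M))/(eqmodXn idL); case: genL.
Qed.

Lemma eqmod_nf f : eqmod L f (nf f).
Proof.
rewrite {1}(mpolyE f) /nf; apply: (eqmod_sum idL) => a _.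
rewrite /nf_term -2!scalerA; apply/(eqmodZ idL).
apply: (eqmod_trans idL (eqmod_monomial a)); apply/(eqmodZ idL).
exact: eqmod_mono3_red.
Qed.

End NormalForm.

(** * Points of the invariant Hilbert scheme *)

Section Main.
Variables (p k m : nat).
Hypotheses (p_gt0 : (0 < p)%N) (k_gt0 : (0 < k)%N) (m_gt0 : (0 < m)%N).
Hypotheses (co_pq : coprime p (p + k)) (k_dvd_m : (k %| m)%N).
Local Notation q := (p + k)%N.
Variables (s1 s2 s3 s4 pi : CC).
Hypotheses (s12_neq0 : (s1 != 0) || (s2 != 0)) (s34_neq0 : (s3 != 0) || (s4 != 0)).
Local Notation Y := (Y s1 s2).
Local Notation Z := (Z s3 s4).
Local Notation mono3 := (mono3 s1 s2 s3 s4).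
Local Notation PP := (PP p k m s1 s2 s3 s4).
Local Notation contains_gens := (contains_gens p k m s1 s2 s3 s4 pi).
Local Notation nf := (nf p k m s1 s2 s3 s4 pi).
Local Notation nf_term := (nf_term p k m s1 s2 s3 s4 pi).

Lemma semi_inv_Y : semi_inv p q m Y (mu p).
Proof.
rewrite /Y /pivot; case: ifP => _; apply: semi_invZ.
  exact: semi_inv_X1.
exact: semi_inv_X2.
Qed.

Lemma semi_inv_Z : semi_inv p q m Z (nu q).
Proof.
rewrite /Z /pivot; case: ifP => _; apply: semi_invZ.
  exact: semi_inv_X3.
exact: semi_inv_X4.
Qed.

Lemma semi_inv_mono3 r : semi_inv p q m (mono3 r) (tchar p q r).
Proof.
case: r => [[a B] C].
exact (semi_invM (semi_invM (semi_invXn _ (@semi_inv_X0 p q m)) (semi_invXn _ semi_inv_Y))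
  (semi_invXn _ semi_inv_Z)).
Qed.

Lemma PP_invariant : Defs.invariant p q m PP.
Proof.
move=> t z Gtz; have -> : PP = mono3 (0, q * (m %/ k), p * (m %/ k))%N.
  by rewrite /mono3 /= expr0 mul1r.
by rewrite semi_inv_mono3 // tchar_PP // scale1r.
Qed.

Definition nf_coef (f : Pol) (r0 : nat * nat * nat) : CC :=
  \sum_(a <- msupp f | red p k m (rho a) == r0)
     f@_a * subst_coef s1 s2 s3 s4 a * red_coef p k m s1 s2 s3 s4 pi (rho a).

Lemma nf_part f r0 :
  \sum_(a <- msupp f | red p k m (rho a) == r0) nf_term f a = nf_coef f r0 *: mono3 r0.
Proof. by rewrite scaler_suml; apply: eq_bigr => a /eqP <-. Qed.

Variables (I : Pol -> Prop) (HI : HilbPt p q m I) (genI : contains_gens I).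
Let idI : is_ideal I. Proof. by case: HI. Qed.
Let stI : G_stable p q m I. Proof. by case: HI. Qed.

(* The terms of [nf f] with a character other than [tchar r0] cancel modulo [I]. *)
Lemma eqmod_nf_part f r0 : reduced p k m r0 ->
  in_char p q m I (tchar p q r0) (nf f) -> eqmod I (nf f) (nf_coef f r0 *: mono3 r0).
Proof.
move=> red_r0 nf_r0; rewrite -nf_part /eqmod /nf.
rewrite (bigID (fun a => red p k m (rho a) == r0)) /= addrAC subrr add0r.
apply: (semi_inv_sum_sep idI stI (c := fun a => tchar p q (red p k m (rho a)))).
- by move=> a _; apply/semi_invZ/semi_inv_mono3.
- move=> a; apply: (tchar_sep p_gt0 k_gt0 m_gt0 co_pq k_dvd_m _ red_r0).
  exact: (reduced_red p_gt0 k_gt0 m_gt0 k_dvd_m).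
- exact: nf_r0.
apply/(in_char_semi_inv idI)/semi_inv_sum => a /negPn/eqP <-.
by apply/semi_invZ/semi_inv_mono3.
Qed.

Lemma mono3_notin r0 : reduced p k m r0 -> ~ I (mono3 r0).
Proof.
case: r0 => [[a B] C] red_r0 I_r0.
case: HI => _ _ _ /(_ ((a + q * C)%:Z - (p * B)%:Z) (C%:Z - B%:Z)) [f [wf fI _]].
apply: fI.
have eq_nf := eqmod_nf s12_neq0 s34_neq0 idI genI f.
have nf_r0 : in_char p q m I (tchar p q (a, B, C)) (nf f).
  apply: (in_char_eqmod idI stI eq_nf); apply: in_char_eq wf => t z Gtz.
  by rewrite tchar_chi // ?(inG_t_neq0 Gtz) ?(inG_z_neq0 m_gt0 Gtz).
apply: (eqmod_mem idI eq_nf); apply: (eqmod_mem idI (eqmod_nf_part red_r0 nf_r0)).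
exact: (idealZ idI _ I_r0).
Qed.

Lemma HilbPt_sub (J : Pol -> Prop) : is_ideal J -> contains_gens J -> forall f, I f -> J f.
Proof.
move=> idJ genJ f If.
have nfI : I (nf f).
  exact/(eqmod_mem idI (eqmod_sym idI (eqmod_nf s12_neq0 s34_neq0 idI genI f))).
suff nf0 : nf f = 0.
  by have := eqmod_nf s12_neq0 s34_neq0 idJ genJ f; rewrite nf0 /eqmod subr0.
rewrite /nf (sum_partition_undup _ (fun a => red p k m (rho a))) big_seq big1 // => r0.
rewrite mem_undup => /mapP[a _ ->]; set r := red p k m (rho a).
have red_r : reduced p k m r by apply: (reduced_red p_gt0 k_gt0 m_gt0 k_dvd_m).
have nf_r := eqmod_nf_part red_r (in_char_mem idI stI _ nfI).
have Ipart := eqmod_mem idI (eqmod_sym idI nf_r) nfI.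
rewrite nf_part; have [-> | c_neq0] := eqVneq (nf_coef f r) 0; first by rewrite scale0r.
by case: (mono3_notin red_r); apply: (idealZV idI c_neq0 Ipart).
Qed.

End Main.

Section WeightSpaces.
Variables (p q m : nat) (I : Pol -> Prop).
Hypothesis HI : HilbPt p q m I.
Let idI : is_ideal I. Proof. by case: HI. Qed.

Lemma in_weight_dep n d V1 V2 :
  in_weight p q m I n d V1 -> in_weight p q m I n d V2 ->
  exists u1 u2 : CC, ((u1 != 0) || (u2 != 0)) /\ I (u1 *: V1 + u2 *: V2).
Proof.
case: HI => _ _ _ /(_ n d) [f [_ _ span_f]] w1 w2.
have [c1 e1] := span_f _ w1; have [c2 e2] := span_f _ w2.
have [c1_0 | c1_neq0] := eqVneq c1 0.
  exists 1, 0; rewrite oner_neq0 scale0r addr0 scale1r; split => //.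
  by move: e1; rewrite c1_0 scale0r subr0.
exists c2, (- c1); split; first by rewrite oppr_eq0 c1_neq0 orbT.
suff -> : c2 *: V1 + (- c1) *: V2 = c2 *: (V1 - c1 *: f) - c1 *: (V2 - c2 *: f).
  exact: (idealB idI (idealZ idI _ e1) (idealZ idI _ e2)).
by rewrite !scalerBr !scalerA [c2 * c1]mulrC opprB subrKA scaleNr.
Qed.

Lemma HilbPt_proper : ~ I 1.
Proof.
case: HI => _ _ _ /(_ 0 0) [f [_ fI _]] I1; apply: fI.
by rewrite -[f]mulr1; apply: (idealMl idI).
Qed.

Lemma HilbPt_form_X12 :
  exists s1 s2 : CC, ((s1 != 0) || (s2 != 0)) /\ I (s1 *: X 1 + s2 *: X 2).
Proof.
have chi_mu t z : inG m t z -> mu p t z = chi (- p%:Z) (-1) t z.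
  by move=> _; rewrite /chi /mu -exprz_inv exprN1 -exprVn.
by apply: (@in_weight_dep (- p%:Z) (-1)); apply: (in_char_eq chi_mu);
  apply: (in_char_semi_inv idI); [apply: semi_inv_X1 | apply: semi_inv_X2].
Qed.

Lemma HilbPt_form_X34 :
  exists s3 s4 : CC, ((s3 != 0) || (s4 != 0)) /\ I (s3 *: X 3 + s4 *: X 4).
Proof.
by apply: (@in_weight_dep q%:Z 1); apply: (in_char_semi_inv idI);
  [apply: semi_inv_X3 | apply: semi_inv_X4].
Qed.

Lemma HilbPt_invariant_const f : Defs.invariant p q m f -> exists pi : CC, I (f - pi%:MP).
Proof.
move=> inv_f.
have chi00 t z : inG m t z -> 1 = chi 0 0 t z by rewrite /chi !expr0z mulr1.
have w1 : in_weight p q m I 0 0 1.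
  apply: (in_char_eq chi00); apply: (in_char_semi_inv idI) => t z _.
  by rewrite scale1r; apply: rmorph1.
have wf : in_weight p q m I 0 0 f.
  by apply: (in_char_eq chi00); apply: (in_char_semi_inv idI) => t z Gtz; rewrite scale1r inv_f.
have [u1 [u2 [u_neq0 Iu]]] := in_weight_dep w1 wf.
have [u2_0 | u2_neq0] := eqVneq u2 0.
  move: u_neq0 Iu; rewrite u2_0 eqxx orbF scale0r addr0 => u1_neq0 /(idealZV idI u1_neq0).
  by move/HilbPt_proper.
exists (- (u1 / u2)).
suff -> : f - (- (u1 / u2))%:MP = u2^-1 *: (u1 *: 1 + u2 *: f) by apply: idealZ.
by rewrite scalerDr !scalerA mulVf // scale1r alg_mpolyC rmorphN opprK addrC [u1 / u2]mulrC.
Qed.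

End WeightSpaces.

Lemma psi_contains_gens p k m s1 s2 s3 s4 pi (I J : Pol -> Prop) :
  (0 < m)%N -> (k %| m)%N -> psi p (p + k) m I = psi p (p + k) m J ->
  HilbPt p (p + k) m J -> contains_gens p k m s1 s2 s3 s4 pi I ->
  contains_gens p k m s1 s2 s3 s4 pi J.
Proof.
move=> m_gt0 k_dvd_m; rewrite /psi => -[gammaIJ eta12 eta34] HJ [I12 I34 _ Ipi].
split; [by rewrite -/(eta_m J (s1, s2)) -eta12 | by rewrite -/(eta_q J (s3, s4)) -eta34
       | by case: HJ | ].
have : gamma p (p + k) m I (PP p k m s1 s2 s3 s4 - pi%:MP).
  by split=> // t z Gtz; rewrite actB actC (PP_invariant _ m_gt0 k_dvd_m).
by rewrite gammaIJ => -[].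
Qed.

Lemma HilbPt_gens_eq p k m s1 s2 s3 s4 pi (I J : Pol -> Prop) :
  (0 < p)%N -> (0 < k)%N -> (0 < m)%N -> coprime p (p + k) -> (k %| m)%N ->
  (s1 != 0) || (s2 != 0) -> (s3 != 0) || (s4 != 0) ->
  HilbPt p (p + k) m I -> HilbPt p (p + k) m J ->
  contains_gens p k m s1 s2 s3 s4 pi I -> contains_gens p k m s1 s2 s3 s4 pi J -> I = J.
Proof.
move=> p_gt0 k_gt0 m_gt0 co_pq k_dvd_m s12 s34 HI HJ genI genJ.
have sub := HilbPt_sub p_gt0 k_gt0 m_gt0 co_pq k_dvd_m (pi := pi) s12 s34.
have [[idI _ _ _] [idJ _ _ _]] := (HI, HJ).
apply: functional_extensionality => f; apply: propositional_extensionality.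
by split; [apply: (sub _ HI genI _ idJ genJ) | apply: (sub _ HJ genJ _ idI genI)].
Qed.

Local Close Scope ring_scope.

Theorem lemma6p3 (p q m : nat) :
  0 < p -> p <= q -> coprime p q -> 0 < m -> (q - p) %| m ->
  forall I J : {mpoly CC[5]} -> Prop,
    HilbPt p q m I -> HilbPt p q m J ->
    psi p q m I = psi p q m J -> I = J.
Proof.
move=> p_gt0 le_pq co_pq m_gt0 dvd_m I J HI HJ eq_psi.
have [k eq_q] : exists k, q = p + k by exists (q - p); rewrite subnKC.
subst q; rewrite addKn in dvd_m.
have k_gt0 : 0 < k by rewrite lt0n; apply: contraTneq dvd_m => ->; rewrite dvd0n -lt0n.
have [s1 [s2 [s12 I12]]] := HilbPt_form_X12 HI.
have [s3 [s4 [s34 I34]]] := HilbPt_form_X34 HI.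
have [pi Ipi] := HilbPt_invariant_const HI (PP_invariant p m_gt0 dvd_m s1 s2 s3 s4).
have genI : contains_gens p k m s1 s2 s3 s4 pi I by case: HI.
have genJ := psi_contains_gens m_gt0 dvd_m eq_psi HJ genI.
exact: (HilbPt_gens_eq p_gt0 k_gt0 m_gt0 co_pq dvd_m s12 s34 HI HJ genI genJ).
Qed.
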